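(* Let $k\ge 3$ be an integer and let $D$ be an oriented graph on $n\ge 1$ vertices such that for every vertex $x$, the in-neighbourhood $x^-$ induces a tournament, and such that $D$ has no directed cycle of length at most $k$. Then $D$ has a vertex of out-degree strictly less than $n/k$.
   Context: Digraphs are finite, no loops, no parallel arcs; an oriented graph has no digon. $x^-$ is the in-neighbourhood of $x$; the out-degree of $x$ is the number of out-neighbours. *)

From mathcomp Require Import all_boot.
Set Implicit Arguments. Unset Strict Implicit. Unset Printing Implicit Defensive.

(* A digraph on a finite vertex type T is an arc relation e : rel T,
   with e x y meaning there is an arc x -> y. *)

Definition oriented (T : finType) (e : rel T) : Prop :=
  (forall x, ~~ e x x) /\ (forall x y, e x y -> ~~ e y x).

Definition in_nbhd (T : finType) (e : rel T) (x : T) : {set T} :=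
  [set y | e y x].

Definition out_nbhd (T : finType) (e : rel T) (x : T) : {set T} :=
  [set y | e x y].

Definition induces_tournament (T : finType) (e : rel T) (A : {set T}) : Prop :=
  forall u v, u \in A -> v \in A -> u != v -> e u v || e v u.

(* a directed cycle of length l: a sequence of l distinct vertices
   [:: v1; ...; vl] with arcs v1->v2->...->vl->v1 *)
Definition dir_cycle (T : finType) (e : rel T) (s : seq T) : bool :=
  [&& 0 < size s, uniq s & cycle e s].

Definition no_short_cycle (T : finType) (e : rel T) (k : nat) : Prop :=
  forall s : seq T, dir_cycle e s -> k < size s.

From mathcomp Require Import all_boot.
From mathcomp Require Import zify.
Set Implicit Arguments. Unset Strict Implicit. Unset Printing Implicit Defensive.

(* Write k = m + 2.  For a vertex set W, a vertex q and a radius j, let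
   ball W q j be the set of vertices reachable from q by a walk of length
   at most j inside W, and call its successive differences layers.  In a
   digraph with no cycle of length <= k whose in-neighbourhoods are
   tournaments, arcs leaving the first m + 2 layers never go back to a lower
   layer and advance by at most one layer (layer_arc).  Moreover, in a
   transitive tournament (no 3-cycle) every nonempty set has a source, so
   one can choose a chain c_1, ..., c_(m+1) through layers 1, ..., m+1 such
   that every vertex of the ball of radius m sends at most one arc into the
   chain (source_chain_outdeg).  Deleting the chain and inducting on #|W|
   shows: if all vertices of ball W q m have out-degree >= d in W, then
   #|ball W q (m+1)| >= (m+1)d + 1 (ball_bound); when layer m+1 is empty,
   the ball is closed under out-arcs and the second bound applies to it.
   Second bound (order_bound): if all out-degrees in a nonempty W are
   >= d, pick q of in-degree >= d (double counting); its in-neighbours lie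
   outside ball W q (m+1), whence #|W| >= (m+2)d + 1.  Applying this to
   the whole vertex set with d the minimum out-degree gives the theorem. *)

Section Digraph.
Variables (T : finType) (e : rel T).

Definition outdeg (W : {set T}) (y : T) : nat := #|[set w in W | e y w]|.
Definition indeg (W : {set T}) (y : T) : nat := #|[set w in W | e w y]|.

Lemma outdeg_setD (W S : {set T}) y : outdeg W y <= outdeg (W :\: S) y + outdeg S y.
Proof.
have hsub : [set w in W | e y w] \subset [set w in W :\: S | e y w] :|: [set w in S | e y w].
  by apply/subsetP => w; rewrite !inE => /andP[-> ->]; rewrite !andbT; case: (w \in S).
by have := subset_leq_card hsub; rewrite cardsU /outdeg; lia.
Qed.

Lemma sum_indeg_outdeg (W : {set T}) :
  \sum_(q in W) indeg W q = \sum_(y in W) outdeg W y.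
Proof.
have card_sum (f : rel T) x : #|[set w in W | f w x]| = \sum_(w in W) (f w x : nat).
  rewrite -sum1_card big_mkcond [RHS]big_mkcond /=.
  by apply: eq_bigr => w _; rewrite !inE; case: (w \in W); case: (f w x).
rewrite /indeg /outdeg (eq_bigr _ (fun q _ => card_sum e q)).
by rewrite (eq_bigr _ (fun y _ => card_sum (fun w y => e y w) y)) exchange_big.
Qed.

Lemma exists_large_indeg (W : {set T}) d : W != set0 ->
  (forall y, y \in W -> d <= outdeg W y) -> exists2 q, q \in W & d <= indeg W q.
Proof.
move=> /set0Pn[q0 hq0] hout.
have [/exists_inP[q hq hd]|] := boolP [exists q in W, d <= indeg W q].
  by exists q.
rewrite negb_exists_in => /forall_inP hsmall; exfalso.
have d_gt0 : 0 < d by move: (hsmall q0 hq0); rewrite -ltnNge; lia.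
have sum_in : \sum_(q in W) indeg W q <= \sum_(q in W) d.-1.
  by apply: leq_sum => q hq; move: (hsmall q hq); rewrite -ltnNge; lia.
have sum_out : \sum_(q in W) d <= \sum_(y in W) outdeg W y by exact: leq_sum.
have W_gt0 : 0 < #|W| by apply/card_gt0P; exists q0.
rewrite sum_indeg_outdeg !sum_nat_const in sum_in sum_out; nia.
Qed.

(* A closed walk x, p through x contains a cycle, so it is longer than k. *)
Lemma closed_walk_long k x p : no_short_cycle e k ->
  path e x p -> e (last x p) x -> k <= size p.
Proof.
move=> hcyc hp; case/shortenP: hp => p' hp' hu p'_sub hl.
have /hcyc : dir_cycle e (x :: p') by rewrite /dir_cycle hu /= rcons_path hp' hl.
have : size p' <= size p by apply: uniq_leq_size p'_sub; case/andP: hu.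
by rewrite /=; lia.
Qed.

Section Balls.
Variables (W : {set T}) (q : T).

(* Vertices reachable from q by a walk of length <= j whose vertices after
   q all lie in W. *)
Fixpoint ball (j : nat) : {set T} :=
  if j is j'.+1 then ball j' :|: [set y in W | [exists x in ball j', e x y]]
  else [set q].

Lemma ball_mono i j : i <= j -> ball i \subset ball j.
Proof.
move=> /subnK <-; elim: (j - i) => [|n IH] //=.
exact: subset_trans IH (subsetUl _ _).
Qed.

Lemma ball_center j : q \in ball j.
Proof. by apply: (subsetP (ball_mono (leq0n j))); rewrite inE. Qed.

Lemma ball_subset j : q \in W -> ball j \subset W.
Proof.
move=> hq; elim: j => [|j IH] /=; first by rewrite sub1set.
by rewrite subUset IH; apply/subsetP => y; rewrite inE => /andP[].
Qed.

Lemma ball_step j x y : x \in ball j -> y \in W -> e x y -> y \in ball j.+1.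
Proof.
move=> hx hy hxy /=; rewrite !inE hy /=; apply/orP; right.
by apply/existsP; exists x; rewrite hx.
Qed.

Lemma ball_walk j y : y \in ball j ->
  exists p, [/\ path e q p, last q p = y & size p <= j].
Proof.
elim: j y => [|j IH] y /=; first by rewrite inE => /eqP ->; exists [::].
case/setUP => [/IH [p [hp hlast hsize]]|]; first by exists p; split => //; lia.
rewrite inE => /andP[_ /existsP [x /andP [/IH [p [hp hlast hsize]] hxy]]].
by exists (rcons p y); rewrite rcons_path hp hlast hxy last_rcons size_rcons.
Qed.

Definition layer (j : nat) (y : T) : bool :=
  (y \in ball j) && (if j is j'.+1 then y \notin ball j' else true).

Lemma layer_ball j y : layer j y -> y \in ball j.
Proof. by case/andP. Qed.

Lemma layer_notin i j y : layer j y -> i < j -> y \notin ball i.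
Proof.
case: j => // j /andP[_ hn]; rewrite ltnS => hij; apply: contra hn.
exact: (subsetP (ball_mono hij)).
Qed.

Lemma layer_uniq i j y : layer i y -> layer j y -> i = j.
Proof.
move=> hi hj; case: (ltngtP i j) => // hij.
  by have := layer_notin hj hij; rewrite (layer_ball hi).
by have := layer_notin hi hij; rewrite (layer_ball hj).
Qed.

Lemma layer_exists n y : y \in ball n -> exists2 l, l <= n & layer l y.
Proof.
elim: n => [|n IH] hy; first by exists 0; rewrite // /layer hy.
have [hn|hn] := boolP (y \in ball n).
  by case: (IH hn) => l hl hly; exists l => //; lia.
by exists n.+1; rewrite // /layer hy hn.
Qed.

Lemma layer_pred j z : layer j.+1 z -> exists2 p, layer j p & e p z.
Proof.
case/andP => /= /setUP[->//|]; rewrite inE => /andP[hzW /existsP[p /andP[hp hpz]]] hn.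
exists p => //; rewrite /layer hp; case: j hp hpz hn => // j hp hpz hn.
by apply: contra hn => hp'; exact: ball_step hp' hzW hpz.
Qed.

End Balls.

Lemma ball_monoW (W W' : {set T}) q j : W' \subset W -> ball W' q j \subset ball W q j.
Proof.
move=> hW; elim: j => [|j IH] //=; apply: setUSS => //.
apply/subsetP => y; rewrite !inE => /andP[hy /existsP[x /andP[hx hxy]]].
by rewrite (subsetP hW _ hy); apply/existsP; exists x; rewrite hxy (subsetP IH).
Qed.

Section ShortCycleFree.
Variable m : nat.
Hypotheses (m_gt0 : 0 < m) (e_oriented : oriented e)
  (in_tournament : forall x : T, induces_tournament e (in_nbhd e x))
  (no_short : no_short_cycle e m.+2).

Lemma no_loop x : ~~ e x x.
Proof. by case: e_oriented. Qed.

Lemma no_3cycle a b c : e a b -> e b c -> e c a -> False.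
Proof.
move=> hab hbc hca.
have := closed_walk_long no_short (p := [:: b; c]) (x := a).
by rewrite /= hab hbc hca => /(_ isT isT); lia.
Qed.

Lemma ball_no_arc_to_center (W : {set T}) q l y :
  l <= m.+1 -> y \in ball W q l -> ~~ e y q.
Proof.
move=> hl /ball_walk[p [hp hlast hsize]]; apply/negP => hyq.
by have := closed_walk_long no_short hp; rewrite hlast => /(_ hyq); lia.
Qed.

(* Arcs from the ball of radius m + 1 never decrease the distance to q:
   the out-neighbour w and a predecessor of w on a shortest walk are both
   in-neighbours of w, hence comparable. *)
Lemma arc_stays_far (W : {set T}) q l y w a : q \in W -> l <= m.+1 ->
  y \in ball W q l -> e y w -> w \in ball W q a -> y \in ball W q a.
Proof.
move=> hq hl hy; have hyW : y \in W := subsetP (ball_subset l hq) y hy.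
elim: a w => [|a IH] w hyw /=.
  by rewrite inE => /eqP hw; move: hyw; rewrite hw (negbTE (ball_no_arc_to_center hl hy)).
have grow x : x \in ball W q a -> x \in ball W q a.+1 by rewrite /= inE => ->.
case/setUP => [|]; first by move/(IH w hyw)/grow.
rewrite inE => /andP[_ /existsP [p /andP [hp hpw]]].
have [<-|hne] := eqVneq p y; first exact: grow.
have /orP[hyp|hpy] : e y p || e p y by apply: (in_tournament (x := w)); rewrite ?inE // eq_sym.
  exact/grow/(IH p hyp hp).
exact: ball_step hp hyW hpy.
Qed.

Lemma layer_arc (W : {set T}) q l j y w : q \in W -> l <= m.+1 ->
  layer W q l y -> e y w -> layer W q j w -> l <= j <= l.+1.
Proof.
move=> hq hl hy hyw hw.
have hyj := arc_stays_far hq hl (layer_ball hy) hyw (layer_ball hw).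
have hwW : w \in W by apply: (subsetP (ball_subset j hq)); exact: layer_ball hw.
have hw1 := ball_step (layer_ball hy) hwW hyw.
apply/andP; split; rewrite leqNgt; apply/negP => hlt.
  by have := layer_notin hy hlt; rewrite hyj.
by have := layer_notin hw hlt; rewrite hw1.
Qed.

(* A nonempty set of in-neighbours of z has a source: a vertex of minimum
   in-degree in P cannot be dominated, since tournaments without directed
   triangles are transitive. *)
Lemma in_nbhd_source (P : {set T}) z : P \subset in_nbhd e z -> P != set0 ->
  exists2 s, s \in P & forall y, y \in P -> ~~ e y s.
Proof.
move=> hPz /set0Pn[p0 hp0].
have [s hs hmin] := arg_minnP (indeg P) hp0.
exists s => // y hy; apply/negP => hys.
have inz x : x \in P -> e x z by move=> /(subsetP hPz); rewrite inE.
have : [set w in P | e w y] \proper [set w in P | e w s].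
  apply/properP; split; last by exists y; rewrite !inE ?hy ?hys ?no_loop.
  apply/subsetP => w; rewrite !inE => /andP[hw hwy]; rewrite hw /=.
  have [hws|hne] := eqVneq w s.
    by move: hwy; rewrite hws => /(proj2 e_oriented s y); rewrite hys.
  have /orP[//|hsw] : e w s || e s w by apply: (in_tournament (x := z)); rewrite ?inE ?inz.
  by case: (no_3cycle hsw hwy hys).
by move/proper_card; rewrite ltnNge hmin.
Qed.

Definition source_chain (W : {set T}) q (c : nat -> T) j : Prop :=
  (forall i, 0 < i <= j -> layer W q i (c i)) /\
  (forall i y, 0 < i < j -> layer W q i y -> e y (c i.+1) -> ~~ e y (c i)).

(* Built downwards from any vertex of layer j, choosing sources. *)
Lemma source_chain_exists (W : {set T}) q j z : 0 < j -> layer W q j z ->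
  exists2 c, c j = z & source_chain W q c j.
Proof.
elim: j z => [//|[|j] IH] z _ hz.
  exists (fun=> z) => //; split=> [i hi|i y]; last by lia.
  by have -> : i = 1 by lia.
set P := [set p | e p z & layer W q j.+1 p].
have [s hsP hsrc] : exists2 s, s \in P & forall y, y \in P -> ~~ e y s.
  apply: (in_nbhd_source (z := z)); first by apply/subsetP => p; rewrite !inE => /andP[].
  by have [p hp hpz] := layer_pred hz; apply/set0Pn; exists p; rewrite !inE hpz.
have hs : layer W q j.+1 s by move: hsP; rewrite inE => /andP[].
have [c hcs [hlay hsrcc]] := IH s isT hs.
exists (fun i => if i == j.+2 then z else c i); first by rewrite eqxx.
split=> [i hi|i y hi].
  by case: eqP => [->//|hne]; apply: hlay; lia.
rewrite (_ : (i == j.+2) = false); last by apply/eqP; lia.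
case: eqVneq => [[hij]|hne].
  by rewrite hij hcs => hy hyz; apply: hsrc; rewrite inE hyz hy.
by apply: hsrcc; lia.
Qed.

(* A vertex of the ball of radius j - 1 sends at most one arc into a source
   chain: two such arcs would end in consecutive layers l and l + 1. *)
Lemma source_chain_outdeg (W : {set T}) q c j y : q \in W -> j <= m.+2 ->
  source_chain W q c j -> y \in ball W q j.-1 ->
  outdeg [set c i.+1 | i : 'I_j] y <= 1.
Proof.
move=> hq hj [hlay hsrc] hy.
have [l hl hly] := layer_exists hy.
have hlm : l <= m.+1 by lia.
have layer_of (a : 'I_j) : e y (c a.+1) -> l <= a.+1 <= l.+1.
  by move=> hya; apply: layer_arc hq hlm hly hya (hlay _ _); have := ltn_ord a; lia.
have two_layers (a b : 'I_j) : e y (c a.+1) -> e y (c b.+1) -> a < b -> False.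
  move=> ha hb hab; have := layer_of a ha; have := layer_of b hb; have := ltn_ord b.
  move=> hbj hb' ha'; have ea : a.+1 = l by lia.
  have eb : b.+1 = l.+1 by lia.
  have lj : 0 < l < j by lia.
  by have := hsrc l y lj hly; rewrite -eb -ea => /(_ hb); rewrite ha.
apply/card_le1_eqP => u v; rewrite !inE.
move=> /andP[/imsetP[a _ ->] ha] /andP[/imsetP[b _ ->] hb].
case: (ltngtP a b) => hab; first by case: (two_layers a b ha hb hab).
  by case: (two_layers b a hb ha hab).
by have -> : a = b by apply: val_inj.
Qed.

Definition ball_bound (W : {set T}) : Prop := forall q d, q \in W ->
  (forall y, y \in ball W q m -> d <= outdeg W y) -> m.+1 * d + 1 <= #|ball W q m.+1|.

Definition order_bound (W : {set T}) : Prop := forall d, W != set0 ->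
  (forall y, y \in W -> d <= outdeg W y) -> m.+2 * d + 1 <= #|W|.

(* q of large in-degree: its in-neighbours are outside ball W q (m + 1). *)
Lemma order_bound_of_ball_bound (W : {set T}) : ball_bound W -> order_bound W.
Proof.
move=> hball d hW0 hout.
have [q hq hin] := exists_large_indeg hW0 hout.
have hb := hball q d hq (fun y hy => hout y (subsetP (ball_subset m hq) y hy)).
have hdisj : ball W q m.+1 :&: [set w in W | e w q] = set0.
  apply/setP => y; rewrite in_set0; apply/negbTE/negP => /setIP[hy].
  by rewrite inE (negbTE (ball_no_arc_to_center (leqnn _) hy)) andbF.
have hsub : ball W q m.+1 :|: [set w in W | e w q] \subset W.
  by rewrite subUset ball_subset //; apply/subsetP => w; rewrite inE => /andP[].
have := subset_leq_card hsub; rewrite cardsU hdisj cards0.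
by move: hin; rewrite /indeg; nia.
Qed.

(* Layer m + 1 is nonempty: delete a source chain of length m + 1; each
   vertex of the ball loses at most one out-neighbour. *)
Lemma ball_bound_far (W : {set T}) q d :
  (forall W' : {set T}, #|W'| < #|W| -> ball_bound W') -> q \in W ->
  (forall y, y \in ball W q m -> d.+1 <= outdeg W y) -> (exists z, layer W q m.+1 z) ->
  m.+1 * d.+1 + 1 <= #|ball W q m.+1|.
Proof.
move=> IH hq hout [z hz].
have [c _ hc] := source_chain_exists (ltn0Sn m) hz.
set S := [set c i.+1 | i : 'I_m.+1].
have chain_layer (i : 'I_m.+1) : layer W q i.+1 (c i.+1) by apply: hc.1; have := ltn_ord i; lia.
have hSb : S \subset ball W q m.+1.
  apply/subsetP => _ /imsetP[i _ ->].
  exact: (subsetP (ball_mono W q (ltn_ord i))) _ (layer_ball (chain_layer i)).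
have hScard : #|S| = m.+1.
  rewrite card_imset ?card_ord // => i j hij; apply: val_inj.
  by have [] := layer_uniq (chain_layer i) (etrans (congr1 _ hij) (chain_layer j)).
have hqS : q \notin S.
  apply/imsetP => -[i _ hqi].
  by have := layer_notin (chain_layer i) (ltn0Sn i); rewrite -hqi ball_center.
set W' := W :\: S.
have hSW : S \subset W by apply: subset_trans hSb (ball_subset _ hq).
have hW' : #|W'| < #|W| by rewrite cardsD (setIidPr hSW) hScard; have := subset_leq_card hSW; lia.
have hqW' : q \in W' by rewrite !inE hqS hq.
have hout' y : y \in ball W' q m -> d <= outdeg W' y.
  move=> /(subsetP (ball_monoW q m (subsetDl W S))) hy.
  have := source_chain_outdeg hq (ltnW (leqnn _)) hc hy.
  by have := hout y hy; have := outdeg_setD W S y; rewrite -/S -/W'; lia.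
have hsub : ball W' q m.+1 \subset ball W q m.+1 :\: S.
  apply/subsetP => y hy; rewrite inE (subsetP (ball_monoW q m.+1 (subsetDl W S)) _ hy) andbT.
  by move: (subsetP (ball_subset m.+1 hqW') _ hy); rewrite inE => /andP[].
have := subset_leq_card hsub; rewrite cardsD (setIidPr hSb) hScard.
by have := IH W' hW' q d hqW' hout'; rewrite mulnS; lia.
Qed.

(* Layer m + 1 is empty: the ball is closed under out-arcs in W and does
   not point back to q, so the order bound applies to it minus q. *)
Lemma ball_bound_closed (W : {set T}) q d :
  (forall W' : {set T}, #|W'| < #|W| -> order_bound W') -> q \in W ->
  (forall y, y \in ball W q m -> d.+1 <= outdeg W y) -> (forall z, ~~ layer W q m.+1 z) ->
  m.+1 * d.+1 + 1 <= #|ball W q m.+1|.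
Proof.
move=> IH hq hout hnone; set Y := ball W q m.
have hY : ball W q m.+1 = Y.
  apply/eqP; rewrite eqEsubset (ball_mono _ _ (leqnSn m)) andbT; apply/subsetP => y hy.
  by apply: contraR (hnone y) => hn; rewrite /layer hy hn.
have closed y w : y \in Y -> w \in W -> e y w -> w \in Y.
  by move=> hy hw hyw; rewrite -hY; exact: ball_step hy hw hyw.
set Y' := Y :\ q.
have hY'lt : #|Y'| < #|W|.
  rewrite (cardsD1 q W) hq add1n ltnS; apply/subset_leq_card/setSD; exact: ball_subset.
have hY'0 : Y' != set0.
  have /card_gt0P[w] : 0 < outdeg W q := leq_trans (ltn0Sn d) (hout q (ball_center W q m)).
  rewrite inE => /andP[hw hqw]; apply/set0Pn; exists w.
  rewrite !inE (closed q w (ball_center W q m) hw hqw) andbT.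
  by apply: contraTneq hqw => ->; exact: no_loop.
have hout' y : y \in Y' -> d.+1 <= outdeg Y' y.
  rewrite inE => /andP[_ hy]; apply: leq_trans (hout y hy) _; apply: subset_leq_card.
  apply/subsetP => w; rewrite !inE => /andP[hw hyw].
  rewrite hyw (closed y w hy hw hyw) !andbT.
  by apply: contraTneq hyw => ->; exact: ball_no_arc_to_center (leqnSn _) hy.
have := IH Y' hY'lt d.+1 hY'0 hout'.
have : #|Y'| <= #|ball W q m.+1| by rewrite hY; apply/subset_leq_card/subsetDl.
nia.
Qed.

Lemma ball_bound_step (W : {set T}) :
  (forall W' : {set T}, #|W'| < #|W| -> ball_bound W' /\ order_bound W') -> ball_bound W.
Proof.
move=> IH q [|d] hq hout.
  by rewrite muln0 add0n card_gt0; apply/set0Pn; exists q; exact: ball_center.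
have [/existsP hfar|/existsPn hnone] := boolP [exists z, layer W q m.+1 z].
  by apply: ball_bound_far => // W' /IH[].
by apply: ball_bound_closed => // W' /IH[].
Qed.

Lemma order_bound_all (W : {set T}) : order_bound W.
Proof.
suff : ball_bound W /\ order_bound W by case.
have [n] := ubnP #|W|; elim: n W => // n IH W hW.
have hball : ball_bound W by apply: ball_bound_step => W' hW'; apply: IH; lia.
by split; last exact: order_bound_of_ball_bound.
Qed.

End ShortCycleFree.

End Digraph.

Theorem theorem3p6 (k : nat) (T : finType) (e : rel T) :
  3 <= k -> 0 < #|T| ->
  oriented e ->
  (forall x : T, induces_tournament e (in_nbhd e x)) ->
  no_short_cycle e k ->
  exists x : T, k * #|out_nbhd e x| < #|T|.
Proof.
move=> hk /card_gt0P[x0 _] hor htour hcyc.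
have [m hkm] : exists m, k = m.+2 by exists k.-2; lia.
subst k; have m_gt0 : 0 < m by lia.
have [x _ hmin] := @arg_minnP T x0 xpredT (fun x => #|out_nbhd e x|) isT.
have hout y : y \in [set: T] -> #|out_nbhd e x| <= outdeg e [set: T] y.
  by move=> _; rewrite (_ : outdeg e _ y = #|out_nbhd e y|) ?hmin //; apply: eq_card => w; rewrite !inE.
have hnonempty : [set: T] != set0 by apply/set0Pn; exists x0.
have := order_bound_all m_gt0 hor htour hcyc hnonempty hout.
by exists x; rewrite -cardsT; lia.
Qed.
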